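(* Let $n\ge 1$, let $\mathbf{Q}\in\mathbb{R}^{n\times n}$ be symmetric, $\mathbf{c}\in\mathbb{R}^n$, $\mathbf{v}\in\mathbb{R}^n_+$, $V_c>0$ and $\beta>0$. Let $\mathcal{Z}_b=\{\mathbf{z}\in\mathbb{R}^n:\ \mathbf{v}^T\mathbf{z}\le V_c\}$ and $$P_\beta(\mathbf{z})=\tfrac12\mathbf{z}^T\mathbf{Q}\mathbf{z}+\tfrac12\beta\|\mathbf{z}\circ\mathbf{z}-\mathbf{z}\|^2-\mathbf{c}^T\mathbf{z}.$$ For $\boldsymbol{\zeta}=(\boldsymbol{\sigma},\tau)\in\mathbb{R}^n\times\mathbb{R}$ put $\mathbf{G}(\boldsymbol{\sigma})=\mathbf{Q}+2\,\mathrm{Diag}(\boldsymbol{\sigma})$, $\boldsymbol{\psi}(\boldsymbol{\sigma},\tau)=\mathbf{c}-\tau\mathbf{v}+\boldsymbol{\sigma}$, $$\Xi_\beta(\mathbf{z},\boldsymbol{\sigma},\tau)=\tfrac12\mathbf{z}^T\mathbf{G}(\boldsymbol{\sigma})\mathbf{z}-\tfrac12\beta^{-1}\|\boldsymbol{\sigma}\|^2-\mathbf{z}^T\boldsymbol{\psi}(\boldsymbol{\sigma},\tau)-\tau V_c,$$ $\mathcal{S}_a^+=\{(\boldsymbol{\sigma},\tau)\in\mathbb{R}^{n+1}:\ \mathbf{G}(\boldsymbol{\sigma})\succ 0,\ \tau>0\}$, and for $\boldsymbol{\zeta}\in\mathcal{S}_a^+$ $$P^d_\beta(\boldsymbol{\zeta})=-\tfrac12\boldsymbol{\psi}(\boldsymbol{\zeta})^T\mathbf{G}(\boldsymbol{\sigma})^{-1}\boldsymbol{\psi}(\boldsymbol{\zeta})-\tfrac12\beta^{-1}\|\boldsymbol{\sigma}\|^2-\tau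 V_c.$$ If $(\mathbf{z}_\beta,\boldsymbol{\zeta}_\beta)\in\mathbb{R}^n\times\mathcal{S}_a^+$ is a KKT point of $\Xi_\beta$, then $\mathbf{z}_\beta$ is a global minimizer of $P_\beta$ over $\mathcal{Z}_b$, $\boldsymbol{\zeta}_\beta$ is a maximizer of $P^d_\beta$ over $\mathcal{S}_a^+$, and $$P_\beta(\mathbf{z}_\beta)=\min_{\mathbf{z}\in\mathcal{Z}_b}P_\beta(\mathbf{z})=\Xi_\beta(\mathbf{z}_\beta,\boldsymbol{\zeta}_\beta)=\max_{\boldsymbol{\zeta}\in\mathcal{S}_a^+}P^d_\beta(\boldsymbol{\zeta})=P^d_\beta(\boldsymbol{\zeta}_\beta).$$
   Context: $\mathbf{z}\circ\mathbf{z}$ denotes the componentwise square $\{z_i^2\}$, and $\mathrm{Diag}(\boldsymbol{\sigma})$ is the diagonal matrix with diagonal $\boldsymbol{\sigma}$. A KKT point $(\mathbf{z},\boldsymbol{\sigma},\tau)$ of $\Xi_\beta$ means: $\nabla_{\mathbf{z}}\Xi_\beta=0$, $\nabla_{\boldsymbol{\sigma}}\Xi_\beta=0$, and $\mathbf{v}^T\mathbf{z}\le V_c$, $\tau\ge 0$, $\tau(\mathbf{v}^T\mathbf{z}-V_c)=0$. This is the penalty relaxation of the quadratic knapsack problem $\min\{\tfrac12\mathbf{z}^T\mathbf{Q}\mathbf{z}-\mathbf{c}^T\mathbf{z}:\ \mathbf{z}\in\{0,1\}^n,\ \mathbf{v}^T\mathbf{z}\le V_c\}$. *)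

From HB Require Import structures.
From mathcomp Require Import all_boot all_order all_algebra.
From mathcomp Require Import all_classical all_reals all_analysis.
Set Implicit Arguments. Unset Strict Implicit. Unset Printing Implicit Defensive.
Import Order.TTheory GRing.Theory Num.Theory.
Import numFieldNormedType.Exports.
Local Open Scope ring_scope.

Section QKP.
Variables (R : realType) (n : nat).
Implicit Types (Q A : 'M[R]_n) (x y z c v s : 'cV[R]_n).

Definition dotv x y : R := (x^T *m y) 0 0.
Definition qform A x : R := (x^T *m A *m x) 0 0.
Definition sqnorm x : R := dotv x x.
Definition hsq z : 'cV[R]_n := \col_i (z i 0 ^+ 2).
Definition Diagv s : 'M[R]_n := diag_mx s^T.
Definition posdef A : Prop := forall x, x != 0 -> 0 < qform A x.

Definition Zb v (Vc : R) z : Prop := dotv v z <= Vc.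

Definition Pbeta Q c (beta : R) z : R :=
  qform Q z / 2 + beta * sqnorm (hsq z - z) / 2 - dotv c z.

Definition Gmat Q s : 'M[R]_n := Q + 2 *: Diagv s.
Definition psi c v s (tau : R) : 'cV[R]_n := c - tau *: v + s.

Definition Xi Q c v (Vc beta : R) z s (tau : R) : R :=
  qform (Gmat Q s) z / 2 - beta^-1 * sqnorm s / 2 - dotv z (psi c v s tau)
  - tau * Vc.

Definition Sa_plus Q s (tau : R) : Prop := posdef (Gmat Q s) /\ 0 < tau.

Definition Pd Q c v (Vc beta : R) s (tau : R) : R :=
  - qform (invmx (Gmat Q s)) (psi c v s tau) / 2 - beta^-1 * sqnorm s / 2
  - tau * Vc.

Definition KKT_Xi Q c v (Vc beta : R) z s (tau : R) : Prop :=
  [/\ forall d : 'cV[R]_n,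
        is_derive z d (fun z' => Xi Q c v Vc beta z' s tau) 0,
      forall d : 'cV[R]_n,
        is_derive s d (fun s' => Xi Q c v Vc beta z s' tau) 0,
      dotv v z <= Vc, 0 <= tau & tau * (dotv v z - Vc) = 0].

End QKP.

From mathcomp Require Import all_boot all_order all_algebra.
From mathcomp Require Import all_classical all_reals all_analysis.
From mathcomp Require Import ring lra.
Set Implicit Arguments. Unset Strict Implicit.
Import Order.TTheory GRing.Theory Num.Theory.
Import numFieldNormedType.Exports.
Local Open Scope ring_scope.
Local Open Scope classical_set_scope.

(** Completing the square in [sigma] gives
    [Xi z s tau = Pbeta z + tau (v^T z - Vc) - |s - beta (z o z - z)|^2 / (2 beta)],
    so [Xi <= Pbeta] on [Zb] as soon as [tau >= 0].  Completing the square in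
    [z] gives [Xi z s tau = Pd s tau + (z - y)^T G(s) (z - y) / 2] with
    [y = G(s)^-1 psi(s, tau)], so [Pd <= Xi] whenever [G(s)] is positive
    definite.  At a KKT point the stationarity conditions read
    [s = beta (z o z - z)] and [G(s) z = psi(s, tau)], which together with
    complementarity make both square terms and the penalty term vanish:
    [Pbeta zb = Xi zb sb taub = Pd sb taub].  The two inequalities, taken at
    [sb, taub] and at [zb] respectively, then give minimality and maximality. *)

Lemma is_derive0_quadratic_coef (R : realType) (V : normedModType R)
    (f : V -> R) x d (a b : R) :
  (forall h : R, f (h *: d + x) = f x + h * a + h ^+ 2 * b) ->
  is_derive x d f 0 -> a = 0.
Proof.
move=> f_quad [_ <-]; apply/esym/cvg_lim => //.
apply: (@cvg_trans _ ((fun h => a + h * b) @ 0^')).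
  apply: near_eq_cvg; near=> h; rewrite /= f_quad [_ *: _]/GRing.scale /=.
  field; by near: h; exact: nbhs_dnbhs_neq.
apply: cvg_within_filter.
have : (fun h : R => a + h * b) @ (0 : R) --> a + 0 * b.
  by apply: cvgD; [exact: cvg_cst | apply: cvgM; [exact: cvg_id | exact: cvg_cst]].
by rewrite mul0r addr0.
Unshelve. all: by end_near.
Qed.

Section QuadraticForms.
Variables (R : realType) (n : nat).
Implicit Types (A B : 'M[R]_n) (x y z d s : 'cV[R]_n).

Lemma dotvE x y : dotv x y = \sum_i x i 0 * y i 0.
Proof. by rewrite /dotv mxE; apply: eq_bigr => i _; rewrite mxE. Qed.

Lemma dotvC x y : dotv x y = dotv y x.
Proof. by rewrite !dotvE; apply: eq_bigr => i _; rewrite mulrC. Qed.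

Lemma dotvDl x y z : dotv (x + y) z = dotv x z + dotv y z.
Proof. by rewrite !dotvE -big_split; apply: eq_bigr => i _; rewrite !mxE mulrDl. Qed.

Lemma dotvZl (k : R) x y : dotv (k *: x) y = k * dotv x y.
Proof. by rewrite !dotvE mulr_sumr; apply: eq_bigr => i _; rewrite !mxE mulrA. Qed.

Lemma dotvNl x y : dotv (- x) y = - dotv x y.
Proof. by rewrite -scaleN1r dotvZl mulN1r. Qed.

Lemma dotvDr x y z : dotv x (y + z) = dotv x y + dotv x z.
Proof. by rewrite dotvC dotvDl !(dotvC x). Qed.

Lemma dotvZr (k : R) x y : dotv x (k *: y) = k * dotv x y.
Proof. by rewrite dotvC dotvZl dotvC. Qed.

Lemma dotvNr x y : dotv x (- y) = - dotv x y.
Proof. by rewrite dotvC dotvNl dotvC. Qed.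

Lemma dotv_delta (i : 'I_n) x : dotv (delta_mx i 0) x = x i 0.
Proof.
rewrite dotvE (bigD1 i) //= big1 => [|j ji]; first by rewrite !mxE eqxx mul1r addr0.
by rewrite !mxE (negbTE ji) mul0r.
Qed.

Lemma dotv_mulmx_sym A x y : A^T = A -> dotv x (A *m y) = dotv y (A *m x).
Proof.
move=> A_sym; have trE (M : 'M[R]_1) : M 0 0 = M^T 0 0 by rewrite mxE.
by rewrite /dotv trE !trmx_mul trmxK A_sym mulmxA.
Qed.

Lemma sqnorm_ge0 x : 0 <= sqnorm x.
Proof. by rewrite /sqnorm dotvE; apply: sumr_ge0 => i _; rewrite -expr2 sqr_ge0. Qed.

Lemma sqnorm0 : sqnorm (0 : 'cV[R]_n) = 0.
Proof. by rewrite /sqnorm dotvE big1 // => i _; rewrite mxE mul0r. Qed.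

Lemma qformE A x : qform A x = dotv x (A *m x).
Proof. by rewrite /qform /dotv mulmxA. Qed.

Lemma qform0 A : qform A 0 = 0.
Proof. by rewrite /qform mulmx0 mxE. Qed.

Lemma qformDl A B x : qform (A + B) x = qform A x + qform B x.
Proof. by rewrite !qformE mulmxDl dotvDr. Qed.

Lemma qformZl (k : R) A x : qform (k *: A) x = k * qform A x.
Proof. by rewrite !qformE -scalemxAl dotvZr. Qed.

Lemma qformDr A x y : A^T = A ->
  qform A (x + y) = qform A x + 2 * dotv x (A *m y) + qform A y.
Proof.
by move=> A_sym; rewrite !qformE mulmxDr !dotvDl !dotvDr (dotv_mulmx_sym y x A_sym); ring.
Qed.

Lemma qformZr A (k : R) x : qform A (k *: x) = k ^+ 2 * qform A x.
Proof. by rewrite !qformE -scalemxAr dotvZl dotvZr mulrA. Qed.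

Lemma qform_Diagv s z : qform (Diagv s) z = dotv s (hsq z).
Proof.
by rewrite qformE !dotvE; apply: eq_bigr => i _; rewrite mul_diag_mx !mxE; ring.
Qed.

Lemma Gmat_sym Q s : Q^T = Q -> (Gmat Q s)^T = Gmat Q s.
Proof. by move=> Q_sym; rewrite /Gmat linearD /= linearZ /= tr_diag_mx Q_sym. Qed.

Lemma posdef_qform_ge0 A x : posdef A -> 0 <= qform A x.
Proof.
move=> A_pd; have [->|x_neq0] := eqVneq x 0; first by rewrite qform0.
exact/ltW/A_pd.
Qed.

Lemma posdef_unitmx A : posdef A -> A \in unitmx.
Proof.
move=> A_pd; rewrite unitmxE unitfE; apply/negP => /det0P[w w_neq0 wA0].
have wT_neq0 : w^T != 0 by rewrite -(inj_eq (@trmx_inj _ _ _)) trmxK trmx0.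
by have := A_pd _ wT_neq0; rewrite /qform trmxK wA0 mul0mx mxE ltxx.
Qed.

Lemma quadratic_stationary_grad0 (f : 'cV[R]_n -> R) x (g : 'cV[R]_n)
    (b : 'cV[R]_n -> R) :
  (forall d (h : R), f (h *: d + x) = f x + h * dotv d g + h ^+ 2 * b d) ->
  (forall d, is_derive x d f 0) -> g = 0.
Proof.
move=> f_quad df0; apply/matrixP => i j; rewrite (ord1 j) mxE -dotv_delta.
exact: is_derive0_quadratic_coef (f_quad _) (df0 _).
Qed.

End QuadraticForms.

Section CanonicalDuality.
Variables (R : realType) (n : nat) (Q : 'M[R]_n) (c v : 'cV[R]_n) (Vc beta : R).
Hypotheses (Q_sym : Q^T = Q) (beta_gt0 : 0 < beta).
Implicit Types (z d s : 'cV[R]_n) (tau : R).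

Lemma Xi_shiftz (h : R) d z s tau :
  Xi Q c v Vc beta (h *: d + z) s tau = Xi Q c v Vc beta z s tau
   + h * dotv d (Gmat Q s *m z - psi c v s tau)
   + h ^+ 2 * (qform (Gmat Q s) d / 2).
Proof.
rewrite /Xi qformDr ?Gmat_sym // qformZr !(dotvDl, dotvDr, dotvZl, dotvNr).
by field; rewrite gt_eqF.
Qed.

Lemma Xi_shifts (h : R) d z s tau :
  Xi Q c v Vc beta z (h *: d + s) tau = Xi Q c v Vc beta z s tau
   + h * dotv d (hsq z - z - beta^-1 *: s)
   + h ^+ 2 * (- beta^-1 * sqnorm d / 2).
Proof.
rewrite /Xi /Gmat /psi !qformDl !qformZl !qform_Diagv /sqnorm.
rewrite !(dotvDl, dotvDr, dotvZl, dotvZr, dotvNr) (dotvC s d) (dotvC z d).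
by field; rewrite gt_eqF.
Qed.

Lemma KKT_Xi_Gmat z s tau :
  KKT_Xi Q c v Vc beta z s tau -> Gmat Q s *m z = psi c v s tau.
Proof.
case=> dz0 _ _ _ _; apply/eqP; rewrite -subr_eq0; apply/eqP.
exact: quadratic_stationary_grad0 (fun d h => Xi_shiftz h d z s tau) dz0.
Qed.

Lemma KKT_Xi_sigma z s tau :
  KKT_Xi Q c v Vc beta z s tau -> s = beta *: (hsq z - z).
Proof.
case=> _ ds0 _ _ _.
have := quadratic_stationary_grad0 (fun d h => Xi_shifts h d z s tau) ds0.
by move/eqP; rewrite subr_eq0 => /eqP ->; rewrite scalerA divff ?gt_eqF ?scale1r.
Qed.

Lemma Xi_Pbeta_square z s tau :
  Xi Q c v Vc beta z s tau = Pbeta Q c beta z + tau * (dotv v z - Vc)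
    - sqnorm (s - beta *: (hsq z - z)) / (2 * beta).
Proof.
rewrite /Xi /Pbeta /Gmat /psi qformDl qformZl qform_Diagv /sqnorm.
rewrite !(dotvDl, dotvDr, dotvNl, dotvNr, dotvZl, dotvZr).
rewrite (dotvC z s) (dotvC z c) (dotvC z v) (dotvC (hsq z) s) (dotvC z (hsq z)).
by field; rewrite gt_eqF.
Qed.

Lemma Xi_le_Pbeta z s tau :
  0 <= tau -> Zb v Vc z -> Xi Q c v Vc beta z s tau <= Pbeta Q c beta z.
Proof.
move=> tau_ge0 z_feas; rewrite Xi_Pbeta_square.
have penalty_le0 : tau * (dotv v z - Vc) <= 0 by rewrite mulr_ge0_le0 ?subr_le0.
have square_ge0 : 0 <= sqnorm (s - beta *: (hsq z - z)) / (2 * beta).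
  by rewrite divr_ge0 ?sqnorm_ge0 ?mulr_ge0 ?ltW.
lra.
Qed.

Lemma Xi_Pd_square z s tau : posdef (Gmat Q s) ->
  Xi Q c v Vc beta z s tau = Pd Q c v Vc beta s tau
    + qform (Gmat Q s) (z - invmx (Gmat Q s) *m psi c v s tau) / 2.
Proof.
move=> G_pd; set G := Gmat Q s; set p := psi c v s tau; set y := invmx G *m p.
have Gy : G *m y = p by rewrite mulKVmx ?posdef_unitmx.
have qform_invmx : qform (invmx G) p = qform G y.
  by rewrite !qformE -/y -[in LHS]Gy dotvC.
rewrite /Xi /Pd -/G -/p qform_invmx qformDr ?Gmat_sym //.
rewrite mulmxN Gy dotvNr -(scaleN1r y) qformZr; by field; rewrite gt_eqF.
Qed.

Lemma Pd_le_Xi z s tau : posdef (Gmat Q s) ->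
  Pd Q c v Vc beta s tau <= Xi Q c v Vc beta z s tau.
Proof.
move=> G_pd; rewrite (Xi_Pd_square z tau G_pd) lerDl.
by rewrite divr_ge0 ?posdef_qform_ge0.
Qed.

Lemma Pd_le_Pbeta z s tau :
  posdef (Gmat Q s) -> 0 <= tau -> Zb v Vc z ->
  Pd Q c v Vc beta s tau <= Pbeta Q c beta z.
Proof.
move=> G_pd tau_ge0 z_feas.
exact: le_trans (Pd_le_Xi z tau G_pd) (Xi_le_Pbeta s tau_ge0 z_feas).
Qed.

Lemma KKT_Xi_eq_Pbeta z s tau : KKT_Xi Q c v Vc beta z s tau ->
  Pbeta Q c beta z = Xi Q c v Vc beta z s tau.
Proof.
move=> kkt; have [_ _ _ _ compl] := kkt.
by rewrite Xi_Pbeta_square compl -(KKT_Xi_sigma kkt) subrr sqnorm0 mul0r addr0 subr0.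
Qed.

Lemma KKT_Xi_eq_Pd z s tau : posdef (Gmat Q s) -> KKT_Xi Q c v Vc beta z s tau ->
  Xi Q c v Vc beta z s tau = Pd Q c v Vc beta s tau.
Proof.
move=> G_pd kkt; rewrite Xi_Pd_square // -(KKT_Xi_Gmat kkt).
by rewrite mulKmx ?posdef_unitmx // subrr qform0 mul0r addr0.
Qed.

End CanonicalDuality.

Theorem theorem1 (R : realType) (n : nat) (Q : 'M[R]_n) (c v : 'cV[R]_n)
    (Vc beta : R) (zb sb : 'cV[R]_n) (taub : R) :
  (0 < n)%N -> Q^T = Q -> (forall i, 0 <= v i 0) -> 0 < Vc -> 0 < beta ->
  Sa_plus Q sb taub ->
  KKT_Xi Q c v Vc beta zb sb taub ->
  [/\ Zb v Vc zb /\
        (forall z, Zb v Vc z -> Pbeta Q c beta zb <= Pbeta Q c beta z),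
      (forall s tau, Sa_plus Q s tau ->
         Pd Q c v Vc beta s tau <= Pd Q c v Vc beta sb taub),
      Pbeta Q c beta zb = Xi Q c v Vc beta zb sb taub &
      Xi Q c v Vc beta zb sb taub = Pd Q c v Vc beta sb taub].
Proof.
move=> _ Q_sym _ _ beta_gt0 [Gb_pd taub_gt0] kkt.
have zb_feas : Zb v Vc zb by case: kkt.
have Pbeta_Xi := KKT_Xi_eq_Pbeta beta_gt0 kkt.
have Xi_Pd := KKT_Xi_eq_Pd Q_sym beta_gt0 Gb_pd kkt.
split=> //.
- split=> // z z_feas; rewrite Pbeta_Xi Xi_Pd.
  exact: (Pd_le_Pbeta c Q_sym beta_gt0 Gb_pd (ltW taub_gt0) z_feas).
- move=> s tau [G_pd tau_gt0]; rewrite -Xi_Pd -Pbeta_Xi.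
  exact: (Pd_le_Pbeta c Q_sym beta_gt0 G_pd (ltW tau_gt0) zb_feas).
Qed.
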